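(* There is an absolute constant $C$ such that the following holds. Let $\mathcal L(G(V,E),M,N,\{\pi^{v,e}\})$ be a $k$-Label Cover instance such that $|(\pi^{v,e})^{-1}(i)|\le d=4^k$ for all projections and all $i\in[N]$, and which is smooth with parameter $J=4^{17k}$. Let $\tau=k^{-13}$ and let $\vec w_v\in\mathbb R^M$ ($v\in V$) be arbitrary (the weight vectors of a halfspace $h(\vec y)=\mathrm{sgn}(\sum_{v\in V}\langle\vec w_v,\vec y_v\rangle-\theta)$ on $\{0,1\}^{V\times M}$). Then the fraction (with multiplicity) of hyperedges of $E$ that are $2\tau$-nice is at least $1-C/k$.
   Context: A $k$-Label Cover instance is a $k$-uniform hypergraph on $V$ with a multiset $E$ of hyperedges $e=(v_1,\dots,v_k)$ of distinct vertices, each with projections $\pi^{v_i,e}:[M]\to[N]$. It is smooth with parameter $J$ if for every vertex $v$ and all $i\ne j\in[M]$, for a uniformly random hyperedge $e$ containing $v$, $\Pr[\pi^{v,e}(i)=\pi^{v,e}(j)]\le1/J$. Critical index: for $\vec u\in\mathbb R^n$ order indices $i_1,\dots,i_n$ by decreasing $|u^{(i)}|$ (ties by increasing index), $\sigma_m^2=\sum_{j\ge m}|u^{(i_j)}|^2$; $c_\tau(\vec u)$ is the smallest $m$ with $|u^{(i_m)}|\le\tau\sigma_m$ ($+\infty$ if none); $C_\tau(\vec u)=\{i_1,\dots,i_{c_\tau(\vec u)-1}\}$ if finite, else $[n]$. $\mathrm{truncate}(\vec u,S)$ agrees with $\vec u$ on $S$ and is $0$ elsewhere. Set $\vec s_v=\mathrm{truncate}(\vec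 w_v,C_\tau(\vec w_v))$ and $\vec l_v=\vec w_v-\vec s_v$. A vertex $v$ is $\beta$-nice with respect to a hyperedge $e\ni v$ if $\sum_{i\in[N]}\big(\sum_{j\in\pi^{-1}(i)}|l_v^{(j)}|\big)^4\le\beta\|\vec l_v\|_2^4$ where $\pi=\pi^{v,e}$; a hyperedge is $\beta$-nice if each of its vertices is $\beta$-nice with respect to it. *)

From HB Require Import structures.
From mathcomp Require Import all_boot all_order all_algebra.
Set Implicit Arguments. Unset Strict Implicit. Unset Printing Implicit Defensive.
Import Order.TTheory GRing.Theory Num.Theory.
Local Open Scope ring_scope.

Section CriticalIndex.
Variables (R : rcfType) (n : nat).
Implicit Types (u : 'I_n -> R) (tau : R).

Definition crit_order u : seq 'I_n :=
  sort (fun a b => (`|u b| < `|u a|) || ((`|u a| == `|u b|) && (a <= b)%N))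
       (enum 'I_n).

(* sigma_{t+1} (0-based t): sqrt of sum_{j >= t+1} |u^(i_j)|^2 *)
Definition crit_sigma u (t : nat) : R :=
  Num.sqrt (\sum_(j <- drop t (crit_order u)) `|u j| ^+ 2).

(* (c_tau(u) - 1): number of indices before the critical index
   (equals n when c_tau = +infinity) *)
Definition crit_pos tau u : nat :=
  find (fun t => if ohead (drop t (crit_order u)) is Some x
                 then `|u x| <= tau * crit_sigma u t else false)
       (iota 0 n).

Definition crit_set tau u : {set 'I_n} :=
  [set x in take (crit_pos tau u) (crit_order u)].

Definition truncate u (S : {set 'I_n}) : 'I_n -> R :=
  fun j => if j \in S then u j else 0.

Definition small_part tau u := truncate u (crit_set tau u).
Definition large_part tau u : 'I_n -> R := fun j => u j - small_part tau u j.

Definition norm2 u : R := Num.sqrt (\sum_j u j ^+ 2).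
End CriticalIndex.

Definition nice_wrt (R : rcfType) (M N : nat) (tau beta : R)
    (w : 'I_M -> R) (pi : 'I_M -> 'I_N) : bool :=
  let l := large_part tau w in
  \sum_(i : 'I_N) (\sum_(j : 'I_M | pi j == i) `|l j|) ^+ 4
    <= beta * norm2 l ^+ 4.

(* Label cover: hyperedges indexed by 'I_m (multiset E), edge e is a k-tuple
   of vertices; proj e v is pi^{v,e} (only meaningful for v in edge e). *)
Definition smooth (V : finType) (k m M N J : nat)
    (edge : 'I_m -> k.-tuple V) (proj : 'I_m -> V -> 'I_M -> 'I_N) : Prop :=
  forall (v : V) (i j : 'I_M), i != j ->
    (#|[set e : 'I_m | (v \in edge e) && (proj e v i == proj e v j)]|%:R
       / #|[set e : 'I_m | v \in edge e]|%:R <= (J%:R)^-1 :> rat).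

Definition nice_edge (R : rcfType) (V : finType) (k m M N : nat) (tau beta : R)
    (edge : 'I_m -> k.-tuple V) (proj : 'I_m -> V -> 'I_M -> 'I_N)
    (w : V -> 'I_M -> R) (e : 'I_m) : bool :=
  [forall p : 'I_k, nice_wrt tau beta (w (tnth (edge e) p)) (proj e (tnth (edge e) p))].

(* Write l for the part of w_v left after removing its first c_tau(w_v) - 1
   coordinates.  Every coordinate of l is at most tau * ||l||, because the
   coordinate at the critical position dominates all later ones.  Call a
   coordinate heavy when l_j^2 > delta ||l||^2 with delta = tau / (8 d^3); there
   are at most 1/delta of them.  For a projection with fibers of size <= d,
   the light coordinates contribute at most d^3 delta ||l||^4 to
   sum_i (sum_{pi j = i} |l_j|)^4 (Cauchy-Schwarz in each fiber), and if no two
   heavy coordinates share a fiber the heavy ones contribute at most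
   sum_j l_j^4 <= tau^2 ||l||^4; with (x + y)^4 <= 8 (x^4 + y^4) this makes v
   (8 tau^2 + tau)-nice, hence 2 tau-nice.  A hyperedge can thus fail to be nice
   only if, at one of its vertices, two heavy coordinates collide; by smoothness
   each of the at most delta^-2 heavy pairs of v collides on at most a 1/J fraction of
   the hyperedges through v, so at most delta^-2 k m / J hyperedges fail, which
   is at most 64 m / k for d = 4^k, J = 4^(17k) and tau = k^-13. *)

From HB Require Import structures.
From mathcomp Require Import all_boot all_order all_algebra ring zify.
Set Implicit Arguments. Unset Strict Implicit. Unset Printing Implicit Defensive.
Import Order.TTheory GRing.Theory Num.Theory.
Local Open Scope ring_scope.

Section CriticalIndex.
Variables (R : rcfType) (n : nat) (tau : R) (u : 'I_n -> R).

Lemma perm_crit_order : perm_eq (crit_order u) (enum 'I_n).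
Proof. by rewrite /crit_order perm_sort. Qed.

Lemma uniq_crit_order : uniq (crit_order u).
Proof. by rewrite (perm_uniq perm_crit_order) enum_uniq. Qed.

Lemma mem_crit_order j : j \in crit_order u.
Proof. by rewrite (perm_mem perm_crit_order) mem_enum. Qed.

Lemma size_crit_order : size (crit_order u) = n.
Proof. by rewrite (perm_size perm_crit_order) size_enum_ord. Qed.

Lemma sorted_crit_order : sorted (fun a b => `|u b| <= `|u a|) (crit_order u).
Proof.
apply: sub_sorted (sort_sorted _ _) => [a b /orP[/ltW|/andP[/eqP ->]] //|a b].
by case: ltgtP => //= _; apply: leq_total.
Qed.

Lemma large_partE j :
  large_part tau u j = if j \in take (crit_pos tau u) (crit_order u) then 0 else u j.
Proof.
rewrite /large_part /small_part /truncate /crit_set inE.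
by case: ifP; rewrite ?subrr ?subr0.
Qed.

Lemma norm2_large_part : norm2 (large_part tau u) = crit_sigma u (crit_pos tau u).
Proof.
have sum_crit (F : 'I_n -> R) : \sum_j F j = \sum_(j <- crit_order u) F j.
  by rewrite (perm_big _ perm_crit_order) big_enum.
rewrite /norm2 /crit_sigma sum_crit.
set s := crit_order u; set p := crit_pos tau u.
rewrite -[in LHS](cat_take_drop p s) big_cat /= big_seq big1 ?add0r => [|j j_take];
  last by rewrite large_partE j_take expr0n.
have := uniq_crit_order; rewrite -/s -{1}(cat_take_drop p s) cat_uniq.
case/and3P=> _ take_drop_disj _.
congr Num.sqrt; rewrite big_seq [RHS]big_seq; apply: eq_bigr => j j_drop.
rewrite large_partE real_normK ?num_real //.
by have /hasPn/(_ j j_drop)/negbTE -> := take_drop_disj.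
Qed.

Lemma large_part_le j : 0 <= tau ->
  `|large_part tau u j| <= tau * norm2 (large_part tau u).
Proof.
move=> tau_ge0; rewrite large_partE.
set s := crit_order u; set p := crit_pos tau u.
case: ifP => j_take; first by rewrite normr0 mulr_ge0 ?sqrtr_ge0.
have j_drop : j \in drop p s.
  by have := mem_crit_order j; rewrite -/s -{1}(cat_take_drop p s) mem_cat j_take.
have p_lt : (p < n)%N.
  by rewrite ltnNge -size_crit_order; apply: contraTN j_drop => /drop_oversize->.
(* [p < n] means the [find] defining [crit_pos] succeeded, so its test holds at [p]. *)
move: (p_lt) j_drop; rewrite -{1}(size_iota 0 n) -has_find => /(nth_find 0%N).
rewrite -/(crit_pos tau u) -/p nth_iota // add0n.
rewrite norm2_large_part; case s_drop: (drop p s) => [|x s'] //= crit_x.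
rewrite in_cons => /predU1P[-> //|j_s']; apply: le_trans crit_x.
have := drop_sorted p sorted_crit_order; rewrite -/s s_drop /= => x_path.
by apply: (allP (order_path_min _ x_path)) => // a b c ba cb; apply: le_trans cb ba.
Qed.

End CriticalIndex.

Lemma sqr_sum_le_card (R : realDomainType) (I : finType) (P : pred I) (x : I -> R) :
  (\sum_(j | P j) x j) ^+ 2 <= #|P|%:R * \sum_(j | P j) x j ^+ 2.
Proof.
rewrite -(ler_pMn2r (n := 2)) // expr2 mulr_suml -sumrMnl.
under eq_bigr => i _ do rewrite mulr_sumr -sumrMnl.
apply: le_trans (ler_sum _ (fun i _ => ler_sum _ (fun j _ =>
  (leif_mean_square_scaled (x i) (x j)).1))) _.
under eq_bigr => i _ do rewrite big_split /= sumr_const.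
by rewrite big_split /= sumrMnl sumr_const mulr_natl mulr2n.
Qed.

Lemma exp4D_le (R : realDomainType) (x y : R) : (x + y) ^+ 4 <= 8 * (x ^+ 4 + y ^+ 4).
Proof.
have sqrD_le (a b : R) : (a + b) ^+ 2 <= (a ^+ 2 + b ^+ 2) *+ 2.
  by rewrite sqrrD mulr2n addrAC lerD2l (leif_mean_square_scaled a b).1.
rewrite -[4%N]/(2 * 2)%N !exprM.
apply: le_trans (_ : ((x ^+ 2 + y ^+ 2) *+ 2) ^+ 2 <= _).
  by rewrite ler_pXn2r ?nnegrE ?sqr_ge0 ?mulrn_wge0 ?addr_ge0 ?sqr_ge0 ?sqrD_le.
rewrite exprMn_n; apply: le_trans (ler_wMn2r _ (sqrD_le _ _)) _.
by rewrite -mulrnA mulr_natl.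
Qed.

Section FiberMoments.
Variables (R : realDomainType) (I J : finType) (pi : I -> J) (a : I -> R).

Lemma sum_fibers (F : I -> R) : \sum_(i : J) \sum_(j | pi j == i) F j = \sum_j F j.
Proof. by rewrite (partition_big pi xpredT). Qed.

Lemma moment4_injective_fibers (H : pred I) : {in H &, injective pi} ->
  \sum_i (\sum_(j | (pi j == i) && H j) a j) ^+ 4 <= \sum_j a j ^+ 4.
Proof.
move=> pi_inj; rewrite -sum_fibers; apply: ler_sum => i _.
have fourth_ge0 (P : pred I) : 0 <= \sum_(j | P j) a j ^+ 4.
  by apply: sumr_ge0 => j _; rewrite -[4%N]/(2 * 2)%N exprM sqr_ge0.
case: (pickP [pred j | (pi j == i) && H j]) => [b /andP[/eqP pib Hb] | no_heavy].
  rewrite (eq_bigl (pred1 b)) => [|j]; last first.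
    apply/andP/eqP => [[/eqP pij Hj]|-> //]; last by rewrite pib.
    by apply: pi_inj; rewrite ?pij.
  by rewrite big_pred1_eq (bigD1 b) ?pib //= lerDl fourth_ge0.
by rewrite big_pred0 // expr0n fourth_ge0.
Qed.

Lemma moment4_light_fibers (Q : pred I) (d : nat) (c : R) : 0 <= c ->
  (forall i, #|[set j | pi j == i]| <= d)%N -> (forall j, Q j -> a j ^+ 2 <= c) ->
  \sum_i (\sum_(j | (pi j == i) && Q j) a j) ^+ 4 <= d%:R ^+ 3 * c * \sum_j a j ^+ 2.
Proof.
move=> c_ge0 fiber_le light.
rewrite -sum_fibers mulr_sumr; apply: ler_sum => i _.
set P := [pred j | (pi j == i) && Q j].
set X := \sum_(j | P j) a j ^+ 2.
have X_ge0 : 0 <= X by apply: sumr_ge0 => j _; rewrite sqr_ge0.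
have X_le : X <= #|P|%:R * c.
  by rewrite mulr_natl -sumr_const; apply: ler_sum => j /andP[_ /light].
have card_P : #|P|%:R <= d%:R :> R.
  rewrite ler_nat; apply: leq_trans (fiber_le i).
  by apply/subset_leq_card/subsetP => j /andP[pij _]; rewrite inE.
set S := \sum_(j | P j) a j.
have CS : S ^+ 2 <= #|P|%:R * X := sqr_sum_le_card P a.
have S_le_X : S ^+ 2 <= d%:R * X by apply: le_trans CS (ler_wpM2r X_ge0 card_P).
have S_le_c : S ^+ 2 <= d%:R ^+ 2 * c.
  apply: le_trans CS _; rewrite expr2 -mulrA.
  by apply: ler_pM => //; apply: le_trans X_le (ler_wpM2r c_ge0 card_P).
have X_fiber : X <= \sum_(j | pi j == i) a j ^+ 2.
  by rewrite [X in _ <= X](bigID Q) /= lerDl sumr_ge0 // => j _; rewrite sqr_ge0.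
rewrite -[4%N]/(2 + 2)%N exprD.
apply: le_trans (ler_pM (sqr_ge0 _) (sqr_ge0 _) S_le_X S_le_c) _.
by rewrite mulrAC mulrA -exprS ler_wpM2l ?mulr_ge0.
Qed.

End FiberMoments.

Definition heavy_coords (R : numDomainType) (I : finType) (delta : R) (a : I -> R) :
    {set I} :=
  [set j | delta * \sum_i a i ^+ 2 < a j ^+ 2].

Lemma sqr_le_sum_sqr (R : realDomainType) (I : finType) (a : I -> R) j :
  a j ^+ 2 <= \sum_i a i ^+ 2.
Proof. by rewrite (bigD1 j) //= lerDl sumr_ge0 // => i _; rewrite sqr_ge0. Qed.

Lemma card_heavy_coords (R : realFieldType) (I : finType) (delta : R) (a : I -> R) :
  0 < delta -> #|heavy_coords delta a|%:R <= delta^-1.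
Proof.
move=> delta_gt0; set H := heavy_coords delta a; set L := \sum_i a i ^+ 2.
have L_ge0 : 0 <= L by apply: sumr_ge0 => i _; rewrite sqr_ge0.
have [L_gt0|L_le0] := ltP 0 L; last first.
  suff -> : H = set0 by rewrite cards0 invr_ge0 ltW.
  have L0 : L = 0 by apply/le_anti; rewrite L_le0 L_ge0.
  by apply/setP => j; rewrite !inE -/L L0 mulr0 ltNge -L0 sqr_le_sum_sqr.
have card_mul_le : #|H|%:R * (delta * L) <= L.
  apply: le_trans (_ : \sum_(j in H) a j ^+ 2 <= _).
    by rewrite mulr_natl -sumr_const; apply: ler_sum => j; rewrite inE => /ltW.
  by rewrite [X in _ <= X](bigID (mem H)) /= lerDl sumr_ge0 // => j _; rewrite sqr_ge0.
by rewrite -(ler_pM2r delta_gt0) mulVf ?gt_eqF // -(ler_pM2r L_gt0) mul1r -mulrA.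
Qed.

Lemma moment4_fibers_le (R : realDomainType) (I J : finType) (pi : I -> J) (a : I -> R)
    (d : nat) (T delta : R) :
  0 <= T -> 0 <= delta -> (forall i, #|[set j | pi j == i]| <= d)%N ->
  (forall j, a j ^+ 2 <= T * \sum_i a i ^+ 2) ->
  {in heavy_coords delta a &, injective pi} ->
  \sum_i (\sum_(j | pi j == i) a j) ^+ 4
    <= 8 * (T + d%:R ^+ 3 * delta) * (\sum_i a i ^+ 2) ^+ 2.
Proof.
move=> T_ge0 delta_ge0 fiber_le a_le heavy_inj.
set L := \sum_i a i ^+ 2; set H := heavy_coords delta a.
have L_ge0 : 0 <= L by apply: sumr_ge0 => i _; rewrite sqr_ge0.
have heavy_part : \sum_i (\sum_(j | (pi j == i) && (j \in H)) a j) ^+ 4 <= T * L ^+ 2.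
  apply: le_trans (moment4_injective_fibers a heavy_inj) _.
  rewrite expr2 mulrA mulr_sumr; apply: ler_sum => j _.
  by rewrite -[4%N]/(2 + 2)%N exprD ler_wpM2r ?sqr_ge0.
have light_part : \sum_i (\sum_(j | (pi j == i) && (j \notin H)) a j) ^+ 4
    <= d%:R ^+ 3 * delta * L ^+ 2.
  rewrite expr2 mulrA -[_ * delta * L]mulrA.
  apply: moment4_light_fibers; rewrite ?mulr_ge0 // => j.
  by rewrite inE -leNgt.
apply: le_trans (_ : \sum_i 8 * ((\sum_(j | (pi j == i) && (j \in H)) a j) ^+ 4
    + (\sum_(j | (pi j == i) && (j \notin H)) a j) ^+ 4) <= _).
  by apply: ler_sum => i _; rewrite (bigID (mem H)) exp4D_le.
by rewrite -mulr_sumr big_split -mulrA ler_pM2l // mulrDl lerD.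
Qed.

(* The threshold makes the light contribution d^3 delta = tau / 8. *)
Lemma nice_wrt_of_heavy_injective (R : rcfType) (M N d : nat) (tau : R)
    (w : 'I_M -> R) (pi : 'I_M -> 'I_N) :
  0 < tau -> 8 * tau <= 1 -> (0 < d)%N -> (forall i, #|[set j | pi j == i]| <= d)%N ->
  {in heavy_coords (tau / (8 * d%:R ^+ 3)) (fun j => `|large_part tau w j|) &,
     injective pi} ->
  nice_wrt tau (2 * tau) w pi.
Proof.
move=> tau_gt0 tau_le d_gt0 fiber_le heavy_inj; rewrite /nice_wrt.
set l := large_part tau w; set L := \sum_j `|l j| ^+ 2.
have norm2_sqr : norm2 l ^+ 2 = L.
  rewrite sqr_sqrtr ?sumr_ge0 // => [|j _]; last by rewrite sqr_ge0.
  by apply: eq_bigr => j _; rewrite real_normK ?num_real.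
have l_le j : `|l j| ^+ 2 <= tau ^+ 2 * L.
  have tau_ge0 := ltW tau_gt0.
  by rewrite -norm2_sqr -exprMn lerXn2r ?nnegrE ?large_part_le ?mulr_ge0 ?sqrtr_ge0.
have := moment4_fibers_le (sqr_ge0 tau) _ fiber_le l_le heavy_inj.
have D_gt0 : 0 < d%:R ^+ 3 :> R by rewrite exprn_gt0 ?ltr0n.
move/(_ (divr_ge0 (ltW tau_gt0) (ltW (mulr_gt0 _ D_gt0))))/le_trans; apply => //.
rewrite -/L -norm2_sqr -exprM ler_wpM2r ?exprn_ge0 ?sqrtr_ge0 //.
have -> : d%:R ^+ 3 * (tau / (8 * d%:R ^+ 3)) = tau / 8.
  by field; rewrite pnatr_eq0 -lt0n.
have -> : 8 * (tau ^+ 2 + tau / 8) = 8 * tau * tau + tau by field.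
rewrite [2 * tau]mulr_natl mulr2n lerD2r.
by rewrite -[X in _ <= X]mul1r ler_pM2r.
Qed.

Lemma card_bigcup_le (I T : finType) (P : pred I) (F : I -> {set T}) :
  (#|\bigcup_(i | P i) F i| <= \sum_(i | P i) #|F i|)%N.
Proof.
elim/big_rec2: _ => [|i A n _ A_le]; first by rewrite cards0.
by apply: leq_trans (leq_card_setU _ _).1 _; rewrite leq_add2l.
Qed.

Section LabelCover.
Variables (V : finType) (k m M N : nat).
Variables (edge : 'I_m -> k.-tuple V) (proj : 'I_m -> V -> 'I_M -> 'I_N).

Definition incident (v : V) : {set 'I_m} := [set e | v \in edge e].

Definition collisions (v : V) (x : 'I_M * 'I_M) : {set 'I_m} :=
  [set e | (v \in edge e) && (proj e v x.1 == proj e v x.2)].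

Lemma sum_card_incident : (\sum_v #|incident v| <= m * k)%N.
Proof.
under eq_bigr => v _ do rewrite -sum1dep_card.
rewrite (exchange_big_dep xpredT) //=.
apply: leq_trans (_ : _ <= \sum_(e : 'I_m) k)%N _; last by rewrite sum_nat_const card_ord.
apply: leq_sum => e _; rewrite sum1dep_card cardsE.
by apply: leq_trans (card_size _) _; rewrite size_tuple.
Qed.

Lemma collisions_sub_incident v x : collisions v x \subset incident v.
Proof. by apply/subsetP => e; rewrite !inE => /andP[]. Qed.

Lemma smooth_card_collisions (J : nat) : (0 < J)%N -> smooth J edge proj ->
  forall v x, x.1 != x.2 -> (J * #|collisions v x| <= #|incident v|)%N.
Proof.
move=> J_gt0 smooth_J v [i j] /= ij; have := smooth_J v i j ij.
rewrite -/(collisions v (i, j)) -/(incident v).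
have := subset_leq_card (collisions_sub_incident v (i, j)).
case: (posnP #|incident v|) => [-> | inc_gt0 _].
  by rewrite leqn0 => /eqP-> _; rewrite muln0.
rewrite ler_pdivrMr ?ltr0n // mulrC => ratio_le.
by rewrite -(ler_nat rat) natrM mulrC -ler_pdivlMr ?ltr0n.
Qed.

Variables (R : rcfType) (w : V -> 'I_M -> R) (tau : R) (d : nat).
Hypotheses (tau_gt0 : 0 < tau) (tau_le : 8 * tau <= 1) (d_gt0 : (0 < d)%N).
Hypothesis fiber_le :
  forall e v i, v \in edge e -> (#|[set j | proj e v j == i]| <= d)%N.

Definition heavy (v : V) : {set 'I_M} :=
  heavy_coords (tau / (8 * d%:R ^+ 3)) (fun j => `|large_part tau (w v) j|).

Definition heavy_pairs (v : V) : {set 'I_M * 'I_M} :=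
  [set x in setX (heavy v) (heavy v) | x.1 != x.2].

Definition not_nice : {set 'I_m} := ~: [set e | nice_edge tau (2 * tau) edge proj w e].

Lemma card_heavy_pairs v : #|heavy_pairs v|%:R <= (8 * d%:R ^+ 3 / tau) ^+ 2.
Proof.
have card_heavy : #|heavy v|%:R <= 8 * d%:R ^+ 3 / tau.
  rewrite -[8 * _ / _]invf_div; apply: card_heavy_coords.
  by rewrite divr_gt0 // mulr_gt0 // exprn_gt0 // ltr0n.
apply: le_trans (_ : #|setX (heavy v) (heavy v)|%:R <= _).
  by rewrite ler_nat subset_leq_card //; apply/subsetP => x; rewrite inE => /andP[].
by rewrite cardsX natrM expr2 ler_pM.
Qed.

Lemma nice_edge_of_collision_free e :
  (forall v x, v \in edge e -> x \in heavy_pairs v -> e \notin collisions v x) ->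
  nice_edge tau (2 * tau) edge proj w e.
Proof.
move=> collision_free; apply/forallP => p; set v := tnth (edge e) p.
have v_e : v \in edge e by rewrite mem_tnth.
apply: (nice_wrt_of_heavy_injective (d := d)) => // [i|j j' heavy_j heavy_j' proj_eq].
  exact: fiber_le v_e.
apply/eqP/negPn/negP => jj'.
have x_heavy : (j, j') \in heavy_pairs v by rewrite inE in_setX /= jj' andbT; apply/andP.
have /negP[] := collision_free v (j, j') v_e x_heavy.
by rewrite inE v_e proj_eq /=.
Qed.

Lemma card_not_nice_le :
  (#|not_nice| <= \sum_v \sum_(x in heavy_pairs v) #|collisions v x|)%N.
Proof.
apply: leq_trans (_ : #|\bigcup_v \bigcup_(x in heavy_pairs v) collisions v x| <= _)%N.
  apply/subset_leq_card/subsetP => e; apply: contraLR => no_collision.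
  rewrite !inE negbK.
  apply: nice_edge_of_collision_free => v x v_e x_heavy; apply: contra no_collision => e_col.
  by apply/bigcupP; exists v => //; apply/bigcupP; exists x.
apply: leq_trans (card_bigcup_le _ _) _; apply: leq_sum => v _.
exact: card_bigcup_le.
Qed.

Lemma card_not_nice_smooth (J K : nat) : (0 < J)%N -> smooth J edge proj ->
  (forall v, #|heavy_pairs v| <= K)%N -> (J * #|not_nice| <= K * (m * k))%N.
Proof.
move=> J_gt0 smooth_J heavy_le.
apply: leq_trans (leq_mul (leqnn J) card_not_nice_le) _.
rewrite big_distrr /=; apply: leq_trans (_ : _ <= \sum_v K * #|incident v|)%N _.
  apply: leq_sum => v _; rewrite big_distrr /=.
  apply: leq_trans (_ : _ <= \sum_(x in heavy_pairs v) #|incident v|)%N _.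
    apply: leq_sum => x; rewrite inE => /andP[_ x_neq].
    exact: smooth_card_collisions.
  by rewrite sum_nat_const leq_mul2r heavy_le orbT.
by rewrite -big_distrr leq_mul2l sum_card_incident orbT.
Qed.

End LabelCover.

Lemma exp4_le_exp8 n : (n ^ 4 <= 8 ^ n)%N.
Proof.
elim: n => [|n IHn] //; case: n IHn => [|[|[|n]]] IHn //.
rewrite [(8 ^ _)%N]expnS; apply: leq_trans (leq_mul (leqnn 8) IHn) => /=.
nia.
Qed.

Lemma heavy_budget_le k :
  ((8 * (4 ^ k) ^ 3 * k ^ 13) ^ 2 * k ^ 2 <= 64 * 4 ^ (17 * k))%N.
Proof.
have k28 : (k ^ 28 <= (4 ^ k) ^ 11)%N.
  apply: leq_trans (_ : (8 ^ k) ^ 7 <= _)%N.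
    by rewrite (expnM k 4 7) leq_exp2r ?exp4_le_exp8.
  by rewrite -!expnM -[8%N]/(2 ^ 3)%N -[4%N]/(2 ^ 2)%N -!expnM leq_exp2l //; lia.
rewrite [(17 * k)%N]mulnC expnM; set a := (4 ^ k)%N.
have -> : ((8 * a ^ 3 * k ^ 13) ^ 2 * k ^ 2 = 64 * (a ^ 6 * k ^ 28))%N by ring.
by rewrite leq_mul2l (_ : 17 = 6 + 11)%N // expnD leq_mul2l k28 !orbT.
Qed.

Lemma mul_le_of_budget (J K k m b C : nat) : (0 < J)%N ->
  (J * b <= K * (m * k))%N -> (K * k ^ 2 <= C * J)%N -> (k * b <= C * m)%N.
Proof.
move=> J_gt0 Jb_le budget; rewrite -(leq_pmul2l J_gt0).
apply: leq_trans (_ : k * (K * (m * k)) <= _)%N; first by rewrite mulnCA leq_mul2l Jb_le orbT.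
apply: leq_trans (_ : K * k ^ 2 * m <= _)%N; first by apply: eq_leq; ring.
by rewrite mulnA leq_mul2r (mulnC J) budget orbT.
Qed.

Lemma one_sub_div_le (R : realFieldType) (C k m b : nat) :
  (0 < k)%N -> (0 < m)%N -> (b <= m)%N -> (k * b <= C * m)%N ->
  1 - C%:R / k%:R <= (m - b)%N%:R / m%:R :> R.
Proof.
move=> k_gt0 m_gt0 b_le kb_le.
rewrite natrB // mulrBl divff ?pnatr_eq0 -?lt0n // lerD2l lerN2.
by rewrite ler_pdivrMr ?ltr0n // mulrAC ler_pdivlMr ?ltr0n // -!natrM ler_nat mulnC.
Qed.

Theorem lemma5p5 :
  exists C : nat,
  forall (R : rcfType) (V : finType) (k m M N : nat)
    (edge : 'I_m -> k.-tuple V) (proj : 'I_m -> V -> 'I_M -> 'I_N)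
    (w : V -> 'I_M -> R),
    (0 < k)%N ->
    (0 < m)%N ->
    (forall e : 'I_m, uniq (edge e)) ->
    (forall (e : 'I_m) (v : V) (i : 'I_N), v \in edge e ->
        (#|[set j : 'I_M | proj e v j == i]| <= 4 ^ k)%N) ->
    smooth (4 ^ (17 * k)) edge proj ->
    let tau : R := (k%:R) ^- 13 in
    1 - C%:R / k%:R <=
      #|[set e : 'I_m | nice_edge tau (2 * tau) edge proj w e]|%:R / m%:R :> R.
Proof.
exists 64%N => R V k m M N edge proj w k_gt0 m_gt0 _ fiber_le smooth_J.
cbv zeta; set tau : R := k%:R ^- 13.
set bad := #|not_nice edge proj w tau|.
have bad_le : (bad <= m)%N by rewrite -[m in (_ <= m)%N]card_ord max_card.
rewrite cardsCs card_ord -/(not_nice edge proj w tau) one_sub_div_le //.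
have [k_le1|k_gt1] := leqP k 1.
  by apply: leq_trans (leq_mul k_le1 bad_le) _; rewrite mul1n leq_pmull.
have tauE : tau = ((k ^ 13)%N%:R)^-1 by rewrite natrX.
have tau_gt0 : 0 < tau by rewrite tauE invr_gt0 ltr0n expn_gt0 k_gt0.
have tau_le : 8 * tau <= 1.
  rewrite tauE ler_pdivrMr ?ltr0n ?expn_gt0 ?k_gt0 // mul1r ler_nat.
  by apply: leq_trans (_ : 2 ^ 13 <= _)%N; rewrite ?leq_exp2r.
have d_gt0 : (0 < 4 ^ k)%N by rewrite expn_gt0.
have J_gt0 : (0 < 4 ^ (17 * k))%N by rewrite expn_gt0.
have pairs_le v :
    (#|heavy_pairs w tau (4 ^ k) v| <= (8 * (4 ^ k) ^ 3 * k ^ 13) ^ 2)%N.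
  rewrite -(ler_nat R); apply: le_trans (card_heavy_pairs w tau_gt0 d_gt0 v) _.
  by rewrite tauE invrK natrX !natrM !natrX.
apply: (mul_le_of_budget J_gt0 _ (heavy_budget_le k)).
exact (card_not_nice_smooth tau_gt0 tau_le d_gt0 fiber_le J_gt0 smooth_J pairs_le).
Qed.
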